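(* Let $s\in(0,1)$. Consider the eigenvalue problem for $v$ on $[0,\pi]$: $$\Big(\partial_\varphi^2+\frac{(1-2s)(1+2s)}{4}\frac{1}{\sin(\varphi)^2}-\frac{(1-2s)^2}{4}\Big)v=\lambda v \ \text{ in }[0,\pi],\qquad \lim_{\sin(\varphi)\to0}\sin(\varphi)^{1-2s}\partial_\varphi\big(\sin(\varphi)^{\frac{2s-1}{2}}v\big)=0 \ \text{ at } \varphi\in\{0,\pi\}.$$ Then the eigenvalues $\lambda$ of this problem (i.e. the values of $\lambda$ for which a nontrivial solution exists) are exactly $$\lambda_k=-\frac{(1-2s)^2}{4}-\Big(k-s+\frac12\Big)^2,\qquad k\in\mathbb{N}_{\ge0}.$$ *)

From Stdlib Require Import Reals.
From Coquelicot Require Import Coquelicot.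
Open Scope R_scope.

Definition pot_coef (s : R) : R := (1 - 2 * s) * (1 + 2 * s) / 4.
Definition shift_coef (s : R) : R := (1 - 2 * s) ^ 2 / 4.

(* The boundary quantity  sin(phi)^(1-2s) * d/dphi ( sin(phi)^((2s-1)/2) v(phi) ),
   meaningful for phi in (0, pi) where sin(phi) > 0. *)
Definition bdry_flux (s : R) (v : R -> R) (phi : R) : R :=
  Rpower (sin phi) (1 - 2 * s) *
  Derive (fun x => Rpower (sin x) ((2 * s - 1) / 2) * v x) phi.

Definition is_eigenfunction (s lam : R) (v : R -> R) : Prop :=
  (exists v' v'' : R -> R,
     forall phi, 0 < phi < PI ->
       is_derive v phi (v' phi) /\ is_derive v' phi (v'' phi) /\
       v'' phi + pot_coef s * / (sin phi) ^ 2 * v phi - shift_coef s * v phi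
         = lam * v phi) /\
  (exists phi, 0 < phi < PI /\ v phi <> 0) /\
  filterlim (bdry_flux s v) (at_right 0) (locally 0) /\
  filterlim (bdry_flux s v) (at_left PI) (locally 0).

Definition is_eigenvalue (s lam : R) : Prop :=
  exists v : R -> R, is_eigenfunction s lam v.

From Stdlib Require Import Reals Lra Classical.
From Coquelicot Require Import Coquelicot.
Open Scope R_scope.

(* With [a = (1-2s)/2] and [v = sin^a w], the problem becomes Gegenbauer's equation
   [w'' + 2a cot w' = mu w] on [(0, pi)], [mu = lam + 2a^2], with vanishing flux [sin^(2a) w']
   at both ends; [lam_k] corresponds to [mu = - k (k + 2a)].
   The ladder [w |-> w' / sin] maps solutions for [(a, mu)] to solutions for
   [(a + 1, mu + 2a + 1)] and preserves boundedness and vanishing flux at the ends. After [k]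
   steps the parameter is [mu + k (k + 2a)], eventually [>= 0], and then the energy identity
   [(sin^(2a) w w')' = sin^(2a) (mu w^2 + w'^2)] forces the solution to be constant. Going back
   down the ladder, the first level carrying a nonzero constant has [mu + n (n + 2a) = 0].
   Conversely, the degree-[k] polynomial solution of Gegenbauer's equation, evaluated at
   [cos phi], gives an eigenfunction for [lam_k]. *)

Ltac unfold_ball := unfold ball in *; simpl in *;
  unfold AbsRing_ball, minus, plus, opp, abs in *; simpl in *.

Definition vanishes_at_0 (f : R -> R) : Prop :=
  forall eps, 0 < eps -> exists del, 0 < del /\ forall x, 0 < x < del -> Rabs (f x) < eps.

Lemma vanishes_at_0_at_right (f : R -> R) :
  vanishes_at_0 f <-> filterlim f (at_right 0) (locally 0).
Proof.
  split.
  - intros H. apply filterlim_locally. intros eps.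
    destruct (H eps (cond_pos eps)) as [d [Hd Hf]].
    exists (mkposreal d Hd). intros y Hy Hy0. unfold_ball.
    rewrite Ropp_0, Rplus_0_r in *. apply Hf. apply Rabs_def2 in Hy. lra.
  - intros H eps Heps.
    destruct (proj1 (filterlim_locally f 0) H (mkposreal eps Heps)) as [d Hd].
    exists d. split; [apply cond_pos|]. intros x Hx.
    assert (Hb : ball 0 d x).
    { unfold_ball. rewrite Ropp_0, Rplus_0_r, Rabs_pos_eq by lra. lra. }
    specialize (Hd x Hb (proj1 Hx)). unfold_ball. rewrite Ropp_0, Rplus_0_r in Hd. exact Hd.
Qed.

Lemma vanishes_at_0_at_left_PI (f : R -> R) :
  vanishes_at_0 (fun x => f (PI - x)) <-> filterlim f (at_left PI) (locally 0).
Proof.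
  split.
  - intros H. apply filterlim_locally. intros eps.
    destruct (H eps (cond_pos eps)) as [d [Hd Hf]].
    exists (mkposreal d Hd). intros y Hy Hy0. unfold_ball.
    rewrite Ropp_0, Rplus_0_r in *. replace y with (PI - (PI - y)) by ring.
    apply Hf. apply Rabs_def2 in Hy. lra.
  - intros H eps Heps.
    destruct (proj1 (filterlim_locally f 0) H (mkposreal eps Heps)) as [d Hd].
    exists d. split; [apply cond_pos|]. intros x Hx.
    assert (Hb : ball PI d (PI - x)).
    { unfold_ball. replace (PI - x + - PI) with (- x) by ring.
      rewrite Rabs_Ropp, Rabs_pos_eq by lra. lra. }
    specialize (Hd _ Hb ltac:(lra)). unfold_ball. rewrite Ropp_0, Rplus_0_r in Hd. exact Hd.
Qed.

Lemma vanishes_at_0_ext (f g : R -> R) (d : R) : 0 < d ->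
  (forall x, 0 < x < d -> f x = g x) -> vanishes_at_0 f -> vanishes_at_0 g.
Proof.
  intros Hd Hfg Hf eps Heps. destruct (Hf eps Heps) as [del [Hdel Hx]].
  exists (Rmin del d). split; [apply Rmin_glb_lt; lra|].
  intros x Hx'. pose proof (Rmin_l del d). pose proof (Rmin_r del d).
  rewrite <- Hfg by lra. apply Hx; lra.
Qed.

Lemma vanishes_at_0_mul_bounded (f g : R -> R) (d M : R) : 0 < d ->
  (forall x, 0 < x < d -> Rabs (g x) <= M) ->
  vanishes_at_0 f -> vanishes_at_0 (fun x => f x * g x).
Proof.
  intros Hd Hg Hf eps Heps.
  set (M' := Rabs M + 1).
  assert (HM' : 0 < M') by (unfold M'; pose proof (Rabs_pos M); lra).
  destruct (Hf (eps / M')) as [del [Hdel Hx]]; [apply Rdiv_lt_0_compat; lra|].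
  exists (Rmin del d). split; [apply Rmin_glb_lt; lra|].
  intros x Hx'. pose proof (Rmin_l del d). pose proof (Rmin_r del d).
  rewrite Rabs_mult.
  assert (Hfx := Hx x ltac:(lra)). assert (Hgx := Hg x ltac:(lra)).
  assert (Hgx' : Rabs (g x) <= M') by (unfold M'; pose proof (Rle_abs M); lra).
  apply Rle_lt_trans with (Rabs (f x) * M').
  - apply Rmult_le_compat_l; [apply Rabs_pos | exact Hgx'].
  - apply Rlt_le_trans with (eps / M' * M'); [apply Rmult_lt_compat_r; lra|].
    right. field. lra.
Qed.

Lemma vanishes_at_0_opp (f : R -> R) :
  vanishes_at_0 f -> vanishes_at_0 (fun x => - f x).
Proof.
  intros Hf eps Heps. destruct (Hf eps Heps) as [del [Hdel Hx]].
  exists del. split; auto. intros x Hx'. rewrite Rabs_Ropp. auto.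
Qed.

Lemma vanishes_at_0_plus (f g : R -> R) :
  vanishes_at_0 f -> vanishes_at_0 g -> vanishes_at_0 (fun x => f x + g x).
Proof.
  intros Hf Hg eps Heps.
  destruct (Hf (eps/2)) as [d1 [H1 H1x]]; [lra|].
  destruct (Hg (eps/2)) as [d2 [H2 H2x]]; [lra|].
  exists (Rmin d1 d2). split; [apply Rmin_glb_lt; lra|].
  intros x Hx. pose proof (Rmin_l d1 d2). pose proof (Rmin_r d1 d2).
  eapply Rle_lt_trans; [apply Rabs_triang|].
  assert (A := H1x x ltac:(lra)). assert (B := H2x x ltac:(lra)). lra.
Qed.

Lemma Rpower_gt_0 (x b : R) : 0 < Rpower x b.
Proof. apply exp_pos. Qed.

Lemma PI_gt_3 : 3 < PI.
Proof. pose proof PI2_3_2. lra. Qed.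

Lemma vanishes_at_0_Rpower_sin (b : R) : 0 < b -> vanishes_at_0 (fun x => Rpower (sin x) b).
Proof.
  intros Hb eps Heps.
  set (r := Rpower (eps/2) (1/b)).
  exists (Rmin 1 r). split; [apply Rmin_glb_lt; [lra | apply Rpower_gt_0]|].
  intros x Hx. pose proof (Rmin_l 1 r). pose proof (Rmin_r 1 r).
  assert (Hs : 0 < sin x) by (apply sin_gt_0; pose proof PI_gt_3; lra).
  pose proof (sin_lt_x x (proj1 Hx)).
  rewrite Rabs_pos_eq by apply Rlt_le, Rpower_gt_0.
  apply Rle_lt_trans with (Rpower r b); [apply Rle_Rpower_l; lra|].
  unfold r. rewrite Rpower_mult. replace (1 / b * b) with 1 by (field; lra).
  rewrite Rpower_1; lra.
Qed.

Lemma nondecreasing_of_derive_nonneg (H h : R -> R) (l r : R) :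
  (forall x, l < x < r -> is_derive H x (h x) /\ 0 <= h x) ->
  forall x y, l < x -> x <= y -> y < r -> H x <= H y.
Proof.
  intros Hd x y Hx Hxy Hy.
  destruct (Req_dec x y) as [->|Hne]; [lra|].
  destruct (MVT_gen H x y h) as [c [Hc Heq]];
    rewrite ?Rmin_left, ?Rmax_right in * by lra.
  - intros z Hz. apply Hd; lra.
  - intros z Hz. apply continuity_pt_filterlim, (ex_derive_continuous H).
    eexists. apply Hd; lra.
  - assert (0 <= h c) by (apply Hd; lra).
    assert (0 <= h c * (y - x)) by (apply Rmult_le_pos; lra). lra.
Qed.

Lemma nonneg_of_derive_nonneg_vanishing (H h : R -> R) (d : R) :
  (forall x, 0 < x < d -> is_derive H x (h x) /\ 0 <= h x) ->
  vanishes_at_0 H -> forall x, 0 < x < d -> 0 <= H x.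
Proof.
  intros Hd Ht x Hx. apply Rnot_lt_le. intros Hneg.
  destruct (Ht (- H x) ltac:(lra)) as [e [He Hy]].
  set (y := Rmin (x/2) (e/2)).
  assert (Hy0 : 0 < y) by (unfold y; apply Rmin_glb_lt; lra).
  pose proof (Rmin_l (x/2) (e/2)). pose proof (Rmin_r (x/2) (e/2)).
  specialize (Hy y ltac:(unfold y in *; lra)).
  pose proof (nondecreasing_of_derive_nonneg H h 0 d Hd y x Hy0
                ltac:(unfold y in *; lra) (proj2 Hx)).
  apply Rabs_def2 in Hy. lra.
Qed.

Definition in_0_PI (x : R) : Prop := 0 < x < PI.

Lemma sin_gt_0_in_0_PI x : in_0_PI x -> 0 < sin x.
Proof. intros [H1 H2]. apply sin_gt_0; lra. Qed.

Lemma in_0_PI_reflect x : in_0_PI x -> in_0_PI (PI - x).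
Proof. unfold in_0_PI; intros; lra. Qed.

Lemma locally_in_0_PI x : in_0_PI x -> locally x in_0_PI.
Proof.
  intros [H1 H2]. assert (Hp : 0 < Rmin x (PI - x)) by (apply Rmin_glb_lt; lra).
  exists (mkposreal _ Hp). intros y Hy. unfold_ball.
  pose proof (Rmin_l x (PI - x)). pose proof (Rmin_r x (PI - x)).
  apply Rabs_def2 in Hy. unfold in_0_PI. lra.
Qed.

Lemma Derive_ext_in_0_PI (f g : R -> R) x : in_0_PI x ->
  (forall t, in_0_PI t -> f t = g t) -> Derive f x = Derive g x.
Proof.
  intros Hx H. apply Derive_ext_loc. eapply filter_imp; [|apply (locally_in_0_PI x Hx)].
  intros t Ht. apply H; auto.
Qed.

Lemma is_derive_ext_in_0_PI (f g : R -> R) x l : in_0_PI x ->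
  (forall t, in_0_PI t -> f t = g t) -> is_derive f x l -> is_derive g x l.
Proof.
  intros Hx H Hd. eapply is_derive_ext_loc; [|exact Hd].
  eapply filter_imp; [|apply (locally_in_0_PI x Hx)]. intros t Ht. apply H; auto.
Qed.

Lemma derive_eq_0_of_vanishing (f : R -> R) x l : in_0_PI x ->
  (forall t, in_0_PI t -> f t = 0) -> is_derive f x l -> l = 0.
Proof.
  intros Hx H Hd. assert (Hd0 : is_derive f x 0).
  { apply (is_derive_ext_in_0_PI (fun _ => 0)); auto.
    - intros t Ht. rewrite H; auto.
    - apply (is_derive_const (K:=R_AbsRing) 0). }
  apply is_derive_unique in Hd. apply is_derive_unique in Hd0. congruence.
Qed.

Lemma const_of_derive_0 (u : R -> R) :
  (forall x, in_0_PI x -> is_derive u x 0) -> forall x, in_0_PI x -> u x = u (PI/2).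
Proof.
  intros H x [Hx1 Hx2]. pose proof PI_gt_3.
  destruct (Rtotal_order x (PI/2)) as [Hlt|[->|Hgt]]; [|reflexivity|symmetry];
    apply (eq_is_derive u); try lra; intros t Ht; apply H; unfold in_0_PI; lra.
Qed.

Lemma at_right_0_in_0_PI : at_right 0 in_0_PI.
Proof.
  exists (mkposreal _ Rlt_0_1). intros y Hy Hy0. unfold_ball. pose proof PI_gt_3.
  apply Rabs_def2 in Hy. unfold in_0_PI. lra.
Qed.

Lemma is_derive_eq (f : R -> R) (x l l' : R) : is_derive f x l -> l = l' -> is_derive f x l'.
Proof. intros H <-; exact H. Qed.

Ltac rewrite_Derive H :=
  match type of H with is_derive ?g ?x ?l =>
  match goal with |- context [Derive ?f x] =>
    rewrite (is_derive_unique f x l H) end end.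

Ltac solve_derive_side := repeat
  match goal with
  | |- _ /\ _ => split
  | |- True => exact I
  | |- ex_derive _ _ => eexists; eassumption
  | |- _ <> _ => lra || nra
  | |- _ < _ => lra
  end.

Lemma sin2_cos2_pow x : sin x ^ 2 + cos x ^ 2 = 1.
Proof. pose proof (sin2_cos2 x). unfold Rsqr in H. lra. Qed.

Lemma eq_of_sub_eq_mul_sin2_cos2 x l r K : l - r = K * (sin x ^ 2 + cos x ^ 2 - 1) -> l = r.
Proof. rewrite sin2_cos2_pow. intros. lra. Qed.

Lemma Rpower_plus_1 y b : 0 < y -> Rpower y (b + 1) = Rpower y b * y.
Proof. intros Hy. rewrite Rpower_plus, Rpower_1; auto. Qed.

Lemma cos_ge_half x : 0 <= x <= PI / 3 -> 1/2 <= cos x.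
Proof. intros Hx. rewrite <- cos_PI3. apply cos_decr_1; pose proof PI_gt_3; lra. Qed.

Lemma is_derive_Rpower_sin (b x : R) : 0 < sin x ->
  is_derive (fun x => Rpower (sin x) b) x (b * Rpower (sin x) b * (cos x / sin x)).
Proof. intros Hs. unfold Rpower. auto_derive; [lra | field; lra]. Qed.

Lemma is_derive_scal_Rpower_sin_plus_1 (K b x : R) : 0 < sin x ->
  is_derive (fun t => K * Rpower (sin t) (b + 1)) x (K * (b + 1) * Rpower (sin x) b * cos x).
Proof.
  intros Hs. eapply is_derive_eq.
  - apply (is_derive_scal (fun t => Rpower (sin t) (b + 1))), is_derive_Rpower_sin; auto.
  - rewrite Rpower_plus_1 by auto. field. lra.
Qed.

Definition reflect_PI (u : R -> R) (x : R) : R := u (PI - x).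

Lemma is_derive_reflect_PI (u : R -> R) x l :
  is_derive u (PI - x) l -> is_derive (reflect_PI u) x (- l).
Proof.
  intros H. eapply is_derive_eq.
  - apply (is_derive_comp u (fun t => PI - t)); [exact H|].
    auto_derive; [auto | reflexivity].
  - unfold scal; simpl; unfold mult; simpl; ring.
Qed.

Lemma is_derive_Rpower_sin_mul (u u1 u2 : R -> R) b x :
  0 < sin x -> is_derive u x (u1 x) -> is_derive u1 x (u2 x) ->
  is_derive (fun t => Rpower (sin t) b * u t) x
    (Rpower (sin x) b * (b * (cos x / sin x) * u x + u1 x)) /\
  is_derive (fun t => Rpower (sin t) b * (b * (cos t / sin t) * u t + u1 t)) x
    (Rpower (sin x) b * (b * b * (cos x / sin x) ^ 2 * u x - b / (sin x) ^ 2 * u x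
                         + 2 * b * (cos x / sin x) * u1 x + u2 x)).
Proof.
  intros Hs H1 H2. split.
  - unfold Rpower. auto_derive.
    + solve_derive_side.
    + rewrite_Derive H1. field. lra.
  - replace (b / sin x ^ 2) with (b * (sin x ^ 2 + cos x ^ 2) / sin x ^ 2)
      by (rewrite sin2_cos2_pow; field; lra).
    unfold Rpower. auto_derive.
    + solve_derive_side.
    + rewrite_Derive H1. rewrite_Derive H2. field. lra.
Qed.

(** * Gegenbauer's equation and the ladder *)

Definition geg_ode (a mu : R) (u u1 : R -> R) : Prop :=
  forall x, in_0_PI x ->
    is_derive u x (u1 x) /\ is_derive u1 x (mu * u x - 2 * a * (cos x / sin x) * u1 x).

Definition geg_sol (a mu : R) (u : R -> R) : Prop := exists u1, geg_ode a mu u u1.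

Definition weighted_flux (a : R) (u : R -> R) (x : R) : R :=
  Rpower (sin x) (2 * a) * Derive u x.

Definition bounded_near_0 (u : R -> R) : Prop :=
  exists M d, 0 < d /\ forall x, 0 < x < d -> Rabs (u x) <= M.

Lemma vanishes_at_0_mul_bounded_near_0 (f v : R -> R) :
  bounded_near_0 v -> vanishes_at_0 f -> vanishes_at_0 (fun x => f x * v x).
Proof. intros [M [d [Hd HM]]]. apply (vanishes_at_0_mul_bounded _ _ d M); auto. Qed.

Definition ladder (u : R -> R) (x : R) : R := Derive u x / sin x.

Section GegenbauerODE.

Variables (a mu : R) (u u1 : R -> R).
Hypothesis Hu : geg_ode a mu u u1.

Lemma Derive_geg x : in_0_PI x -> Derive u x = u1 x.
Proof. intros Hx. exact (is_derive_unique _ _ _ (proj1 (Hu x Hx))). Qed.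

Lemma Derive_reflect_geg x : in_0_PI x -> Derive (reflect_PI u) x = - u1 (PI - x).
Proof.
  intros Hx. apply is_derive_unique, is_derive_reflect_PI.
  exact (proj1 (Hu _ (in_0_PI_reflect x Hx))).
Qed.

Lemma geg_ode_reflect : geg_ode a mu (reflect_PI u) (fun x => - u1 (PI - x)).
Proof.
  intros x Hx. destruct (Hu (PI - x) (in_0_PI_reflect x Hx)) as [H1 H2]. split.
  - apply is_derive_reflect_PI, H1.
  - eapply is_derive_eq.
    + apply (is_derive_reflect_PI (fun t => - u1 t)), (is_derive_opp u1), H2.
    + rewrite sin_PI_x, Rtrigo_facts.cos_pi_minus. unfold reflect_PI, opp; simpl.
      unfold Rdiv. ring.
Qed.

Lemma geg_ode_divergence_form x : in_0_PI x ->
  is_derive (fun t => Rpower (sin t) (2 * a) * u1 t) x (Rpower (sin x) (2 * a) * (mu * u x)).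
Proof.
  intros Hx. pose proof (sin_gt_0_in_0_PI x Hx). eapply is_derive_eq.
  - apply (is_derive_mult (fun t => Rpower (sin t) (2 * a)) u1).
    + apply is_derive_Rpower_sin; auto.
    + exact (proj2 (Hu x Hx)).
    + intros; apply Rmult_comm.
  - unfold plus, mult; simpl. unfold mult; simpl. field. lra.
Qed.

Lemma ladder_reflect x : in_0_PI x -> ladder (reflect_PI u) x = - reflect_PI (ladder u) x.
Proof.
  intros Hx. unfold ladder. rewrite Derive_reflect_geg by auto. unfold reflect_PI.
  rewrite Derive_geg, sin_PI_x by (apply in_0_PI_reflect, Hx).
  field. apply Rgt_not_eq, sin_gt_0_in_0_PI, Hx.
Qed.

Definition ladder_derivative (x : R) : R :=
  (mu * u x * sin x - (2 * a + 1) * cos x * u1 x) / sin x ^ 2.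

Lemma is_derive_ladder x : in_0_PI x -> is_derive (ladder u) x (ladder_derivative x).
Proof.
  intros Hx. pose proof (sin_gt_0_in_0_PI x Hx) as Hs. destruct (Hu x Hx) as [H1 H2].
  apply (is_derive_ext_in_0_PI (fun t => u1 t / sin t)); auto.
  { intros t Ht. unfold ladder. rewrite Derive_geg; auto. }
  auto_derive.
  - solve_derive_side.
  - rewrite_Derive H2. unfold ladder_derivative. field. lra.
Qed.

Lemma geg_ode_ladder : geg_ode (a + 1) (mu + 2 * a + 1) (ladder u) ladder_derivative.
Proof.
  intros x Hx. pose proof (sin_gt_0_in_0_PI x Hx) as Hs. destruct (Hu x Hx) as [H1 H2].
  split; [apply is_derive_ladder, Hx|].
  unfold ladder_derivative. auto_derive.
  - solve_derive_side.
  - rewrite_Derive H1. rewrite_Derive H2. unfold ladder. rewrite Derive_geg by auto.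
    field. lra.
Qed.

Section NearZero.

Variables (M d : R).
Hypotheses (Ha : -1/2 < a) (Hd : 0 < d) (HM : forall x, 0 < x < d -> Rabs (u x) <= M)
  (Hflux : vanishes_at_0 (weighted_flux a u)).

Let F (x : R) : R := Rpower (sin x) (2 * a) * u1 x.

Lemma vanishes_at_0_weighted_u1 : vanishes_at_0 F.
Proof.
  apply (vanishes_at_0_ext (weighted_flux a u) _ PI); [pose proof PI_gt_3; lra| |exact Hflux].
  intros x Hx. unfold F, weighted_flux. rewrite Derive_geg; [reflexivity | exact Hx].
Qed.

Let K : R := 2 * Rabs mu * Rabs M / (2 * a + 1).
Let d1 : R := Rmin d (PI / 3).

Lemma d1_gt_0 : 0 < d1.
Proof. apply Rmin_glb_lt; [exact Hd | pose proof PI_gt_3; lra]. Qed.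

(* [(K sin^(2a+1) - sg F)' = sin^(2a) ((2a+1) K cos - sg mu u) >= 0] on [(0, d1)], because
   [cos >= 1/2] there, and [K sin^(2a+1) - sg F] vanishes at [0+]. *)
Lemma weighted_u1_comparison sg : Rabs sg = 1 ->
  forall x, 0 < x < d1 -> 0 <= K * Rpower (sin x) (2 * a + 1) - sg * F x.
Proof.
  intros Hsg. pose proof PI_gt_3.
  assert (d1 <= d) by apply Rmin_l. assert (d1 <= PI / 3) by apply Rmin_r.
  apply (nonneg_of_derive_nonneg_vanishing _
           (fun x => Rpower (sin x) (2 * a) * (K * (2 * a + 1) * cos x - sg * (mu * u x)))).
  - intros y Hy. assert (HyI : in_0_PI y) by (unfold in_0_PI; lra).
    pose proof (sin_gt_0_in_0_PI y HyI). split.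
    + eapply is_derive_eq.
      * apply (is_derive_minus (fun t => K * Rpower (sin t) (2 * a + 1)) (fun t => sg * F t)).
        -- apply is_derive_scal_Rpower_sin_plus_1; auto.
        -- apply (is_derive_scal F), geg_ode_divergence_form, HyI.
      * unfold minus, plus, opp, scal, mult; simpl. unfold mult; simpl. ring.
    + apply Rmult_le_pos; [apply Rlt_le, Rpower_gt_0|].
      assert (1/2 <= cos y) by (apply cos_ge_half; lra).
      assert (Hmu : Rabs (sg * (mu * u y)) <= Rabs mu * Rabs M).
      { rewrite !Rabs_mult, Hsg, Rmult_1_l. apply Rmult_le_compat_l; [apply Rabs_pos|].
        pose proof (HM y ltac:(lra)). pose proof (Rle_abs M). lra. }
      replace (K * (2 * a + 1)) with (2 * Rabs mu * Rabs M) by (unfold K; field; lra).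
      pose proof (Rle_abs (sg * (mu * u y))). pose proof (Rabs_pos mu). pose proof (Rabs_pos M).
      assert (0 <= Rabs mu * Rabs M * (cos y - 1/2)) by (apply Rmult_le_pos; nra). nra.
  - apply (vanishes_at_0_ext (fun x => Rpower (sin x) (2 * a + 1) * K + F x * (- sg)) _ PI);
      [lra | intros; ring |].
    apply vanishes_at_0_plus.
    + apply (vanishes_at_0_mul_bounded _ _ PI (Rabs K)); [lra | intros; lra |].
      apply vanishes_at_0_Rpower_sin. lra.
    + apply (vanishes_at_0_mul_bounded _ _ PI 1);
        [lra | intros; cbv beta; rewrite Rabs_Ropp; lra | apply vanishes_at_0_weighted_u1].
Qed.

Lemma weighted_u1_le x : 0 < x < d1 -> Rabs (F x) <= K * Rpower (sin x) (2 * a + 1).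
Proof.
  intros Hx. apply Rabs_le.
  pose proof (weighted_u1_comparison 1 Rabs_R1 x Hx).
  pose proof (weighted_u1_comparison (-1) ltac:(unfold Rabs; destruct Rcase_abs; lra) x Hx). lra.
Qed.

Lemma ladder_bounded_near_0 : bounded_near_0 (ladder u).
Proof.
  pose proof d1_gt_0. exists K, (Rmin d1 PI). split; [apply Rmin_glb_lt; pose proof PI_gt_3; lra|].
  intros x Hx. pose proof (Rmin_l d1 PI). pose proof (Rmin_r d1 PI).
  assert (HxI : in_0_PI x) by (unfold in_0_PI; lra).
  pose proof (sin_gt_0_in_0_PI x HxI) as Hs.
  pose proof (Rpower_gt_0 (sin x) (2 * a + 1)).
  replace (ladder u x) with (F x / Rpower (sin x) (2 * a + 1)).
  - unfold Rdiv. rewrite Rabs_mult, Rabs_inv, (Rabs_pos_eq (Rpower _ _)) by lra.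
    apply (Rmult_le_reg_r (Rpower (sin x) (2 * a + 1))); auto.
    rewrite Rmult_assoc, Rinv_l by lra. pose proof (weighted_u1_le x ltac:(lra)). lra.
  - unfold ladder, F. rewrite Derive_geg, Rpower_plus_1 by auto.
    pose proof (Rpower_gt_0 (sin x) (2 * a)). field. lra.
Qed.

Lemma ladder_flux_vanishes : vanishes_at_0 (weighted_flux (a + 1) (ladder u)).
Proof.
  pose proof PI_gt_3.
  apply (vanishes_at_0_ext
           (fun x => Rpower (sin x) (2 * a + 1) * (mu * u x) + F x * (- (2 * a + 1) * cos x)) _ PI);
    [lra| |].
  - intros x Hx. pose proof (sin_gt_0_in_0_PI x Hx).
    unfold weighted_flux. rewrite (is_derive_unique _ _ _ (is_derive_ladder x Hx)).
    replace (2 * (a + 1)) with (2 * a + 1 + 1) by ring. rewrite !Rpower_plus_1 by auto.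
    unfold F, ladder_derivative. field. lra.
  - apply vanishes_at_0_plus.
    + apply (vanishes_at_0_mul_bounded _ _ d (Rabs mu * Rabs M)); auto.
      * intros x Hx. rewrite Rabs_mult. apply Rmult_le_compat_l; [apply Rabs_pos|].
        pose proof (HM x Hx). pose proof (Rle_abs M). lra.
      * apply vanishes_at_0_Rpower_sin. lra.
    + apply (vanishes_at_0_mul_bounded _ _ PI (Rabs (2 * a + 1)));
        [lra | |apply vanishes_at_0_weighted_u1].
      intros x Hx. rewrite Rabs_mult, Rabs_Ropp.
      rewrite <- (Rmult_1_r (Rabs (2 * a + 1))) at 2.
      apply Rmult_le_compat_l; [apply Rabs_pos | apply Rabs_le, COS_bound].
Qed.

End NearZero.

Lemma is_derive_geg_energy x : in_0_PI x ->
  is_derive (fun t => Rpower (sin t) (2 * a) * u1 t * u t) x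
    (Rpower (sin x) (2 * a) * (mu * u x ^ 2 + u1 x ^ 2)).
Proof.
  intros Hx. eapply is_derive_eq.
  - apply (is_derive_mult (fun t => Rpower (sin t) (2 * a) * u1 t) u).
    + apply geg_ode_divergence_form, Hx.
    + exact (proj1 (Hu x Hx)).
    + intros; apply Rmult_comm.
  - unfold plus, mult; simpl. unfold mult; simpl. ring.
Qed.

(* The energy [G = sin^(2a) u1 u] is nondecreasing when [mu >= 0] and vanishes at both ends,
   so it is identically [0], and then so is [G' >= sin^(2a) u1^2]. *)
Lemma geg_derivative_eq_0 : 0 <= mu ->
  bounded_near_0 u -> bounded_near_0 (reflect_PI u) ->
  vanishes_at_0 (weighted_flux a u) -> vanishes_at_0 (weighted_flux a (reflect_PI u)) ->
  forall x, in_0_PI x -> u1 x = 0.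
Proof.
  intros Hmu B0 BPI F0 FPI. pose proof PI_gt_3.
  set (G := fun x => Rpower (sin x) (2 * a) * u1 x * u x).
  set (g := fun x => Rpower (sin x) (2 * a) * (mu * u x ^ 2 + u1 x ^ 2)).
  assert (HG : forall x, in_0_PI x -> is_derive G x (g x) /\ 0 <= g x).
  { intros x Hx. split; [apply is_derive_geg_energy, Hx|].
    apply Rmult_le_pos; [apply Rlt_le, Rpower_gt_0 | nra]. }
  assert (Hleft : forall x, in_0_PI x -> 0 <= G x).
  { apply (nonneg_of_derive_nonneg_vanishing G g PI HG).
    apply (vanishes_at_0_ext (fun x => weighted_flux a u x * u x) _ PI); [lra| |].
    - intros y Hy. unfold G, weighted_flux. rewrite Derive_geg; auto.
    - apply vanishes_at_0_mul_bounded_near_0; auto. }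
  assert (Hright : forall x, in_0_PI x -> 0 <= - G (PI - x)).
  { apply (nonneg_of_derive_nonneg_vanishing _ (fun x => g (PI - x)) PI).
    - intros y Hy. pose proof (HG (PI - y) (in_0_PI_reflect y Hy)) as [HGd Hg]. split; auto.
      eapply is_derive_eq; [apply (is_derive_reflect_PI (fun t => - G t)), (is_derive_opp G), HGd|].
      unfold opp; simpl. ring.
    - apply (vanishes_at_0_ext (fun x => weighted_flux a (reflect_PI u) x * reflect_PI u x) _ PI);
        [lra| |].
      + intros y Hy. unfold G, weighted_flux, reflect_PI.
        rewrite Derive_reflect_geg, sin_PI_x by auto. ring.
      + apply vanishes_at_0_mul_bounded_near_0; auto. }
  intros x Hx.
  assert (HG0 : forall t, in_0_PI t -> G t = 0).
  { intros t Ht. pose proof (Hleft t Ht). pose proof (Hright (PI - t) (in_0_PI_reflect t Ht)).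
    replace (PI - (PI - t)) with t in * by ring. lra. }
  pose proof (derive_eq_0_of_vanishing G x (g x) Hx HG0 (proj1 (HG x Hx))) as Hg0.
  unfold g in Hg0. pose proof (Rpower_gt_0 (sin x) (2 * a)).
  assert (mu * u x ^ 2 + u1 x ^ 2 = 0).
  { apply (Rmult_eq_reg_l (Rpower (sin x) (2 * a))); [rewrite Hg0; ring | lra]. }
  nra.
Qed.

Lemma geg_derivative_le_of_flux : vanishes_at_0 (weighted_flux a u) ->
  exists del, 0 < del /\ forall x, 0 < x < del -> Rabs (u1 x) <= Rpower (sin x) (- (2 * a)).
Proof.
  intros Hf. pose proof PI_gt_3.
  destruct (Hf 1 ltac:(lra)) as [del [Hdel Hfd]].
  exists (Rmin del PI). split; [apply Rmin_glb_lt; lra|].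
  intros x Hx. pose proof (Rmin_l del PI). pose proof (Rmin_r del PI).
  assert (HxI : in_0_PI x) by (unfold in_0_PI; lra).
  pose proof (sin_gt_0_in_0_PI x HxI) as Hs.
  specialize (Hfd x ltac:(lra)). unfold weighted_flux in Hfd. rewrite Derive_geg in Hfd by auto.
  replace (u1 x) with (Rpower (sin x) (- (2 * a)) * (Rpower (sin x) (2 * a) * u1 x)).
  - rewrite Rabs_mult, (Rabs_pos_eq (Rpower _ _)) by apply Rlt_le, Rpower_gt_0.
    pose proof (Rpower_gt_0 (sin x) (- (2 * a))). nra.
  - rewrite <- Rmult_assoc, <- Rpower_plus.
    replace (- (2 * a) + 2 * a) with 0 by ring. rewrite Rpower_O by auto. ring.
Qed.

(* As [2a < 1], the bound [|u1| <= sin^(-2a)] is integrable at [0]: [h +/- u] is nondecreasing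
   for [h = 2 sin^(1-2a) / (1-2a)]. *)
Lemma geg_bounded_of_flux : a < 1/2 -> vanishes_at_0 (weighted_flux a u) -> bounded_near_0 u.
Proof.
  intros Ha Hf. pose proof PI_gt_3.
  destruct (geg_derivative_le_of_flux Hf) as [del [Hdel Hu1]].
  set (d1 := Rmin del (PI / 3)).
  assert (Hd1 : 0 < d1) by (apply Rmin_glb_lt; lra).
  assert (d1 <= del) by apply Rmin_l. assert (d1 <= PI / 3) by apply Rmin_r.
  set (h := fun x => 2 / (1 - 2 * a) * Rpower (sin x) (- (2 * a) + 1)).
  assert (Hmono : forall sg, Rabs sg = 1 -> forall x y, 0 < x -> x <= y -> y < d1 ->
            h x + sg * u x <= h y + sg * u y).
  { intros sg Hsg.
    apply (nondecreasing_of_derive_nonneg _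
             (fun x => 2 / (1 - 2 * a) * (- (2 * a) + 1) * Rpower (sin x) (- (2 * a)) * cos x
                       + sg * u1 x)).
    intros x Hx. assert (HxI : in_0_PI x) by (unfold in_0_PI; lra).
    pose proof (sin_gt_0_in_0_PI x HxI) as Hs. split.
    - apply (is_derive_plus h (fun t => sg * u t)).
      + apply is_derive_scal_Rpower_sin_plus_1; auto.
      + apply (is_derive_scal u). exact (proj1 (Hu x HxI)).
    - replace (2 / (1 - 2 * a) * (- (2 * a) + 1)) with 2 by (field; lra).
      assert (1/2 <= cos x) by (apply cos_ge_half; lra).
      specialize (Hu1 x ltac:(lra)).
      rewrite <- (Rmult_1_l (Rabs (u1 x))), <- Hsg, <- Rabs_mult in Hu1.
      pose proof (Rpower_gt_0 (sin x) (- (2 * a))). pose proof (Rabs_maj2 (sg * u1 x)). nra. }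
  set (x0 := d1 / 2).
  exists (h x0 + Rabs (u x0)), x0. split; [unfold x0; lra|].
  intros x Hx.
  pose proof (Hmono 1 Rabs_R1 x x0 ltac:(lra) ltac:(lra) ltac:(unfold x0; lra)).
  pose proof (Hmono (-1) ltac:(unfold Rabs; destruct Rcase_abs; lra) x x0
                ltac:(lra) ltac:(lra) ltac:(unfold x0; lra)).
  assert (0 <= h x).
  { apply Rmult_le_pos; [apply Rlt_le, Rdiv_lt_0_compat; lra | apply Rlt_le, Rpower_gt_0]. }
  pose proof (Rle_abs (u x0)). pose proof (Rabs_maj2 (u x0)).
  apply Rabs_le. lra.
Qed.

Lemma geg_const_mul_eq_0 c : (forall x, in_0_PI x -> u x = c) -> mu * c = 0.
Proof.
  intros Hc. pose proof PI_gt_3.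
  assert (Hmid : in_0_PI (PI / 2)) by (unfold in_0_PI; lra).
  assert (U1 : forall t, in_0_PI t -> u1 t = 0).
  { intros t Ht. apply (derive_eq_0_of_vanishing (fun x => u x - c) t (u1 t) Ht).
    - intros; rewrite Hc; auto; ring.
    - eapply is_derive_eq.
      + apply (is_derive_minus u (fun _ => c));
          [exact (proj1 (Hu t Ht)) | apply (is_derive_const (K:=R_AbsRing))].
      + unfold minus, plus, opp, zero; simpl. ring. }
  pose proof (derive_eq_0_of_vanishing u1 (PI / 2) _ Hmid U1 (proj2 (Hu _ Hmid))) as H0.
  rewrite U1, Hc in H0 by auto. lra.
Qed.

Lemma geg_const_of_derivative_eq_0 :
  (forall x, in_0_PI x -> u1 x = 0) -> forall x, in_0_PI x -> u x = u (PI / 2).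
Proof.
  intros H. apply const_of_derive_0. intros x Hx. rewrite <- (H x Hx). exact (proj1 (Hu x Hx)).
Qed.

Lemma geg_derivative_eq_0_of_ladder :
  (forall x, in_0_PI x -> ladder u x = 0) -> forall x, in_0_PI x -> u1 x = 0.
Proof.
  intros H x Hx. specialize (H x Hx). unfold ladder in H. rewrite Derive_geg in H by auto.
  pose proof (sin_gt_0_in_0_PI x Hx).
  apply (Rmult_eq_reg_r (/ sin x)); [lra | apply Rgt_not_eq, Rinv_0_lt_compat; auto].
Qed.

End GegenbauerODE.

Definition admissible (a mu : R) (u : R -> R) : Prop :=
  geg_sol a mu u /\ bounded_near_0 u /\ bounded_near_0 (reflect_PI u) /\
  vanishes_at_0 (weighted_flux a u) /\ vanishes_at_0 (weighted_flux a (reflect_PI u)).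

Lemma bounded_near_0_ext_opp (f g : R -> R) :
  (forall x, in_0_PI x -> f x = - g x) -> bounded_near_0 f -> bounded_near_0 g.
Proof.
  intros Hfg [M [d [Hd HM]]]. pose proof PI_gt_3.
  exists M, (Rmin d PI). split; [apply Rmin_glb_lt; lra|].
  intros x Hx. pose proof (Rmin_l d PI). pose proof (Rmin_r d PI).
  replace (g x) with (- f x) by (rewrite Hfg by (unfold in_0_PI; lra); ring).
  rewrite Rabs_Ropp. apply HM. lra.
Qed.

Lemma weighted_flux_ext_opp (b : R) (f g : R -> R) :
  (forall x, in_0_PI x -> f x = - g x) ->
  vanishes_at_0 (weighted_flux b f) -> vanishes_at_0 (weighted_flux b g).
Proof.
  intros Hfg Hf. pose proof PI_gt_3.
  apply (vanishes_at_0_ext (fun x => - weighted_flux b f x) _ PI); [lra| |].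
  - intros x Hx. unfold weighted_flux.
    rewrite (Derive_ext_in_0_PI f (fun t => - g t) x Hx Hfg), Derive_opp. ring.
  - apply vanishes_at_0_opp, Hf.
Qed.

Lemma admissible_ladder a mu u : -1/2 < a ->
  admissible a mu u -> admissible (a + 1) (mu + 2 * a + 1) (ladder u).
Proof.
  intros Ha [[u1 Hu] [[M [d [Hd HM]]] [[M' [d' [Hd' HM']]] [F0 FPI]]]].
  pose proof (geg_ode_reflect _ _ _ _ Hu) as Hr.
  pose proof (ladder_reflect _ _ _ _ Hu) as Hlr.
  split; [exists (ladder_derivative a mu u u1); apply geg_ode_ladder, Hu|].
  split; [apply (ladder_bounded_near_0 _ _ _ _ Hu M d); auto|].
  split.
  { apply (bounded_near_0_ext_opp _ _ Hlr).
    apply (ladder_bounded_near_0 _ _ _ _ Hr M' d'); auto. }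
  split; [apply (ladder_flux_vanishes _ _ _ _ Hu M d); auto|].
  apply (weighted_flux_ext_opp _ _ _ Hlr).
  apply (ladder_flux_vanishes _ _ _ _ Hr M' d'); auto.
Qed.

Lemma admissible_of_flux a mu u : -1/2 < a < 1/2 -> geg_sol a mu u ->
  vanishes_at_0 (weighted_flux a u) -> vanishes_at_0 (weighted_flux a (reflect_PI u)) ->
  admissible a mu u.
Proof.
  intros Ha [u1 Hu] F0 FPI. pose proof (geg_ode_reflect _ _ _ _ Hu) as Hr.
  repeat split; auto; [exists u1; exact Hu | |];
    eapply geg_bounded_of_flux; eauto; lra.
Qed.

Definition ladder_iter (u : R -> R) (k : nat) : R -> R := Nat.iter k ladder u.

Definition level_mu (a mu : R) (k : nat) : R := mu + INR k * (INR k + 2 * a).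

Lemma admissible_ladder_iter a mu u k : -1/2 < a ->
  admissible a mu u -> admissible (a + INR k) (level_mu a mu k) (ladder_iter u k).
Proof.
  intros Ha H0. induction k as [|k IH].
  - unfold level_mu. simpl.
    replace (a + 0) with a by ring. replace (mu + 0 * (0 + 2 * a)) with mu by ring.
    exact H0.
  - replace (a + INR (S k)) with (a + INR k + 1) by (rewrite S_INR; ring).
    replace (level_mu a mu (S k)) with (level_mu a mu k + 2 * (a + INR k) + 1)
      by (unfold level_mu; rewrite S_INR; ring).
    apply admissible_ladder; [pose proof (pos_INR k); lra | exact IH].
Qed.

(* Once [level_mu a mu k >= 0] the [k]-th ladder image is constant; descending the ladder,
   the first level carrying a nonzero constant has [level_mu = 0]. *)
Lemma admissible_spectrum a mu u : -1/2 < a -> admissible a mu u ->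
  (exists x, in_0_PI x /\ u x <> 0) -> exists n : nat, level_mu a mu n = 0.
Proof.
  intros Ha H0 [x0 [Hx0 Hux0]].
  pose proof (fun k => admissible_ladder_iter a mu u k Ha H0) as Hall.
  assert (Hdesc : forall k, (exists c, forall x, in_0_PI x -> ladder_iter u k x = c) ->
            exists n, level_mu a mu n = 0).
  { induction k as [|k IH]; intros [c Hc].
    - exists O. destruct (Hall O) as [[u1 Hu] _].
      pose proof (geg_const_mul_eq_0 _ _ _ _ Hu c Hc).
      simpl in Hc. rewrite Hc in Hux0 by auto. apply (Rmult_eq_reg_r c); lra.
    - destruct (Req_dec c 0) as [->|Hc0].
      + apply IH. destruct (Hall k) as [[u1 Hu] _].
        exists (ladder_iter u k (PI / 2)). apply (geg_const_of_derivative_eq_0 _ _ _ _ Hu).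
        apply (geg_derivative_eq_0_of_ladder _ _ _ _ Hu), Hc.
      + exists (S k). destruct (Hall (S k)) as [[u1 Hu] _].
        pose proof (geg_const_mul_eq_0 _ _ _ _ Hu c Hc). apply (Rmult_eq_reg_r c); lra. }
  destruct (nfloor_ex (Rabs mu) (Rabs_pos mu)) as [n Hn].
  apply (Hdesc (S (S n))). exists (ladder_iter u (S (S n)) (PI / 2)).
  destruct (Hall (S (S n))) as [[u1 Hu] [B0 [BPI [F0 FPI]]]].
  apply (geg_const_of_derivative_eq_0 _ _ _ _ Hu).
  apply (geg_derivative_eq_0 _ _ _ _ Hu); auto.
  unfold level_mu. rewrite !S_INR. pose proof (pos_INR n). pose proof (Rabs_maj2 mu). nra.
Qed.

(** * Polynomial solutions *)

(* Power series coefficients of a polynomial solution of Gegenbauer's equation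
   [(1 - y^2) P'' - (2a+1) y P' + n (n+2a) P = 0]: the coefficients of the parity opposite
   to [n] vanish from the start, those of the parity of [n] vanish beyond [n]. *)
Fixpoint geg_coef (a : R) (n k : nat) : R :=
  match k with
  | O => if Nat.even n then 1 else 0
  | S O => if Nat.even n then 0 else 1
  | S (S j) => geg_coef a n j * (INR j * (INR j + 2 * a) - INR n * (INR n + 2 * a))
               / ((INR j + 1) * (INR j + 2))
  end.

(* Partial sums over [k < N] of the series and of its first two derivatives; the truncated
   exponents [k - 1], [k - 2] only occur with a vanishing factor [INR k] or [INR k - 1]. *)
Fixpoint geg_psum (a : R) (n N : nat) (y : R) : R :=
  match N with O => 0 | S N' => geg_psum a n N' y + geg_coef a n N' * y ^ N' end.

Fixpoint geg_psum_d1 (a : R) (n N : nat) (y : R) : R :=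
  match N with
  | O => 0
  | S N' => geg_psum_d1 a n N' y + INR N' * geg_coef a n N' * y ^ (N' - 1)
  end.

Fixpoint geg_psum_d2 (a : R) (n N : nat) (y : R) : R :=
  match N with
  | O => 0
  | S N' => geg_psum_d2 a n N' y + INR N' * (INR N' - 1) * geg_coef a n N' * y ^ (N' - 2)
  end.

Lemma is_derive_geg_psum a n N y : is_derive (geg_psum a n N) y (geg_psum_d1 a n N y).
Proof.
  induction N as [|N IH]; simpl.
  - auto_derive; auto.
  - apply (is_derive_plus (geg_psum a n N) (fun y => geg_coef a n N * y ^ N)); auto.
    destruct N as [|N]; auto_derive; auto; simpl; rewrite ?Nat.sub_0_r; ring.
Qed.

Lemma is_derive_geg_psum_d1 a n N y : is_derive (geg_psum_d1 a n N) y (geg_psum_d2 a n N y).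
Proof.
  induction N as [|N IH]; simpl.
  - auto_derive; auto.
  - apply (is_derive_plus (geg_psum_d1 a n N) (fun y => INR N * geg_coef a n N * y ^ (N - 1)));
      auto.
    destruct N as [|[|N]]; auto_derive; auto; simpl; rewrite ?Nat.sub_0_r, ?S_INR; ring.
Qed.

Definition geg_residual (a : R) (n N : nat) (y : R) : R :=
  (1 - y ^ 2) * geg_psum_d2 a n N y - (2 * a + 1) * y * geg_psum_d1 a n N y
  + INR n * (INR n + 2 * a) * geg_psum a n N y.

Lemma geg_residual_SS a n j y :
  geg_residual a n (S (S j)) y =
  geg_coef a n (S j) * (INR n * (INR n + 2 * a) - INR (S j) * (INR (S j) + 2 * a)) * y ^ S j +
  geg_coef a n j * (INR n * (INR n + 2 * a) - INR j * (INR j + 2 * a)) * y ^ j.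
Proof.
  induction j as [|j IH].
  - unfold geg_residual. cbn [geg_psum geg_psum_d1 geg_psum_d2 pow Nat.sub].
    rewrite S_INR. simpl INR. ring.
  - unfold geg_residual in *.
    set (c2 := geg_coef a n (S (S j))).
    assert (Hrec : c2 * ((INR j + 1) * (INR j + 2))
                   = geg_coef a n j * (INR j * (INR j + 2 * a) - INR n * (INR n + 2 * a))).
    { unfold c2. cbn [geg_coef]. pose proof (pos_INR j). field. split; lra. }
    transitivity ((1 - y ^ 2) * geg_psum_d2 a n (S (S j)) y
      - (2 * a + 1) * y * geg_psum_d1 a n (S (S j)) y
      + INR n * (INR n + 2 * a) * geg_psum a n (S (S j)) y
      + c2 * ((1 - y ^ 2) * INR (S (S j)) * (INR (S (S j)) - 1) * y ^ j
              - (2 * a + 1) * INR (S (S j)) * y ^ S (S j)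
              + INR n * (INR n + 2 * a) * y ^ S (S j))).
    { cbn [geg_psum geg_psum_d1 geg_psum_d2]. fold c2.
      replace (S (S j) - 1)%nat with (S j) by reflexivity.
      replace (S (S j) - 2)%nat with j by (simpl; rewrite Nat.sub_0_r; reflexivity).
      cbn [pow]. ring. }
    rewrite IH.
    replace (geg_coef a n j * (INR n * (INR n + 2 * a) - INR j * (INR j + 2 * a)))
      with (- (c2 * ((INR j + 1) * (INR j + 2)))) by (rewrite Hrec; ring).
    fold c2. cbn [pow]. rewrite !S_INR. ring.
Qed.

Lemma geg_coef_opposite_parity a n m :
  (Nat.even m = negb (Nat.even n) -> geg_coef a n m = 0) /\
  (Nat.even (S m) = negb (Nat.even n) -> geg_coef a n (S m) = 0).
Proof.
  induction m as [|m [IH1 IH2]].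
  - split; intros H; cbn [geg_coef]; destruct (Nat.even n); simpl in H;
      try discriminate; reflexivity.
  - split; auto. intros H. cbn [geg_coef]. rewrite IH1; [unfold Rdiv; ring | exact H].
Qed.

Lemma geg_residual_eq_0 a n y : geg_residual a n (S (S (S n))) y = 0.
Proof.
  rewrite geg_residual_SS.
  replace (geg_coef a n (S n)) with 0.
  - replace (geg_coef a n (S (S n))) with 0 by (cbn [geg_coef]; unfold Rdiv; ring). ring.
  - symmetry. apply (proj1 (geg_coef_opposite_parity a n (S n))).
    rewrite Nat.even_succ, Nat.negb_even. reflexivity.
Qed.

Lemma geg_psum_at_0 a n m : geg_psum a n (S m) 0 = geg_coef a n 0.
Proof.
  induction m as [|m IH]; [simpl; ring|].
  cbn [geg_psum] in *. rewrite IH. cbn [pow]. ring.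
Qed.

Lemma geg_psum_d1_at_0 a n m : geg_psum_d1 a n (S (S m)) 0 = geg_coef a n 1.
Proof.
  induction m as [|m IH]; [simpl; ring|].
  cbn [geg_psum_d1] in *. rewrite IH. replace (S (S m) - 1)%nat with (S m) by reflexivity.
  cbn [pow]. ring.
Qed.

Lemma geg_psum_d1_bounded a n N :
  exists B, forall y, Rabs y <= 1 -> Rabs (geg_psum_d1 a n N y) <= B.
Proof.
  induction N as [|N [B IH]].
  - exists 0. intros y _. simpl. rewrite Rabs_R0. lra.
  - exists (B + Rabs (INR N * geg_coef a n N)). intros y Hy. simpl.
    eapply Rle_trans; [apply Rabs_triang|]. apply Rplus_le_compat; auto.
    rewrite Rabs_mult, <- RPow_abs.
    pose proof (pow_le (Rabs y) (N - 1) (Rabs_pos y)).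
    assert (Rabs y ^ (N - 1) <= 1)
      by (rewrite <- (pow1 (N - 1)); apply pow_incr; pose proof (Rabs_pos y); lra).
    pose proof (Rabs_pos (INR N * geg_coef a n N)). nra.
Qed.

Lemma geg_ode_gegenbauer a n :
  geg_ode a (- (INR n * (INR n + 2 * a)))
    (fun x => geg_psum a n (S (S (S n))) (cos x))
    (fun x => - sin x * geg_psum_d1 a n (S (S (S n))) (cos x)).
Proof.
  intros x Hx. pose proof (sin_gt_0_in_0_PI x Hx) as Hs.
  pose proof (is_derive_geg_psum a n (S (S (S n))) (cos x)) as D0.
  pose proof (is_derive_geg_psum_d1 a n (S (S (S n))) (cos x)) as D1.
  pose proof (geg_residual_eq_0 a n (cos x)) as R0. unfold geg_residual in R0.
  set (P := geg_psum a n (S (S (S n)))) in *. set (P1 := geg_psum_d1 a n (S (S (S n)))) in *.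
  split.
  - auto_derive; [solve_derive_side|]. rewrite_Derive D0. ring.
  - replace (- (INR n * (INR n + 2 * a)) * P (cos x)
             - 2 * a * (cos x / sin x) * (- sin x * P1 (cos x)))
      with (- (INR n * (INR n + 2 * a)) * P (cos x) + 2 * a * cos x * P1 (cos x)) by (field; lra).
    auto_derive; [solve_derive_side|]. rewrite_Derive D1.
    assert (Z : (sin x ^ 2 + cos x ^ 2 - 1) * geg_psum_d2 a n (S (S (S n))) (cos x) = 0)
      by (rewrite sin2_cos2_pow; ring).
    lra.
Qed.

Lemma gegenbauer_cos_nonzero a n :
  exists x, in_0_PI x /\ geg_psum a n (S (S (S n))) (cos x) <> 0.
Proof.
  apply NNPP. intros Hno. pose proof PI_gt_3.
  assert (Hz : forall x, in_0_PI x -> geg_psum a n (S (S (S n))) (cos x) = 0).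
  { intros x Hx. destruct (Req_dec (geg_psum a n (S (S (S n))) (cos x)) 0) as [|Hne]; auto.
    exfalso. apply Hno. exists x. auto. }
  assert (Hmid : in_0_PI (PI / 2)) by (unfold in_0_PI; lra).
  pose proof (Hz _ Hmid) as Z0. rewrite cos_PI2, geg_psum_at_0 in Z0.
  pose proof (derive_eq_0_of_vanishing _ _ _ Hmid Hz (proj1 (geg_ode_gegenbauer a n _ Hmid))) as Z1.
  rewrite cos_PI2, sin_PI2, geg_psum_d1_at_0 in Z1.
  cbn [geg_coef] in Z0, Z1. destruct (Nat.even n); lra.
Qed.

Lemma weighted_flux_vanishes_of_derivative_le a mu w w1 B : -1/2 < a ->
  geg_ode a mu w w1 -> (forall x, in_0_PI x -> Rabs (w1 x) <= B * sin x) ->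
  vanishes_at_0 (weighted_flux a w) /\ vanishes_at_0 (weighted_flux a (reflect_PI w)).
Proof.
  intros Ha Hw HB. pose proof PI_gt_3.
  assert (Hquot : forall x, in_0_PI x -> Rabs (w1 x / sin x) <= B).
  { intros x Hx. pose proof (sin_gt_0_in_0_PI x Hx). unfold Rdiv.
    rewrite Rabs_mult, Rabs_inv, (Rabs_pos_eq (sin x)) by lra.
    apply (Rmult_le_reg_r (sin x)); auto. rewrite Rmult_assoc, Rinv_l by lra.
    specialize (HB x Hx). lra. }
  split.
  - apply (vanishes_at_0_ext (fun x => Rpower (sin x) (2 * a + 1) * (w1 x / sin x)) _ PI); [lra| |].
    + intros x Hx. pose proof (sin_gt_0_in_0_PI x Hx). unfold weighted_flux.
      rewrite (Derive_geg _ _ _ _ Hw x Hx), Rpower_plus_1 by auto. field. lra.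
    + apply (vanishes_at_0_mul_bounded _ _ PI B);
        [lra | intros; apply Hquot; unfold in_0_PI; lra |].
      apply vanishes_at_0_Rpower_sin. lra.
  - apply (vanishes_at_0_ext
             (fun x => Rpower (sin x) (2 * a + 1) * - (w1 (PI - x) / sin (PI - x))) _ PI); [lra| |].
    + intros x Hx. pose proof (sin_gt_0_in_0_PI x Hx). unfold weighted_flux.
      rewrite (Derive_reflect_geg _ _ _ _ Hw x Hx), sin_PI_x, Rpower_plus_1 by auto. field. lra.
    + apply (vanishes_at_0_mul_bounded _ _ PI B); [lra | |apply vanishes_at_0_Rpower_sin; lra].
      intros x Hx. rewrite Rabs_Ropp. apply Hquot. unfold in_0_PI; lra.
Qed.

Lemma gegenbauer_flux_vanishes a n : -1/2 < a ->
  vanishes_at_0 (weighted_flux a (fun x => geg_psum a n (S (S (S n))) (cos x))) /\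
  vanishes_at_0 (weighted_flux a (reflect_PI (fun x => geg_psum a n (S (S (S n))) (cos x)))).
Proof.
  intros Ha. destruct (geg_psum_d1_bounded a n (S (S (S n)))) as [B HB].
  apply (weighted_flux_vanishes_of_derivative_le _ _ _ _ B Ha (geg_ode_gegenbauer a n)).
  intros x Hx. pose proof (sin_gt_0_in_0_PI x Hx).
  rewrite Rabs_mult, Rabs_Ropp, (Rabs_pos_eq (sin x)), Rmult_comm by lra.
  apply Rmult_le_compat_r; [lra | apply HB, Rabs_le, COS_bound].
Qed.

(** * The eigenvalue problem *)

Lemma geg_ode_of_eigen_ode s lam (v v' v'' : R -> R) :
  (forall phi, 0 < phi < PI -> is_derive v phi (v' phi) /\ is_derive v' phi (v'' phi) /\
     v'' phi + pot_coef s * / (sin phi) ^ 2 * v phi - shift_coef s * v phi = lam * v phi) ->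
  geg_ode ((1 - 2 * s) / 2) (lam + 2 * ((1 - 2 * s) / 2) ^ 2)
    (fun x => Rpower (sin x) ((2 * s - 1) / 2) * v x)
    (fun x => Rpower (sin x) ((2 * s - 1) / 2) * ((2 * s - 1) / 2 * (cos x / sin x) * v x + v' x)).
Proof.
  intros Hv x Hx. pose proof (sin_gt_0_in_0_PI x Hx) as Hs.
  destruct (Hv x Hx) as [H1 [H2 Hode]].
  destruct (is_derive_Rpower_sin_mul v v' v'' ((2 * s - 1) / 2) x Hs H1 H2) as [D1 D2].
  split; [exact D1|]. eapply is_derive_eq; [exact D2|].
  replace (v'' x) with (lam * v x - pot_coef s * / sin x ^ 2 * v x + shift_coef s * v x) by lra.
  apply (eq_of_sub_eq_mul_sin2_cos2 x _ _
           (- Rpower (sin x) ((2 * s - 1) / 2) * v x * ((1 - 2 * s) / 2) ^ 2 / sin x ^ 2)).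
  unfold pot_coef, shift_coef. field. lra.
Qed.

Lemma eigen_ode_of_geg_ode s mu (w w1 : R -> R) :
  geg_ode ((1 - 2 * s) / 2) mu w w1 ->
  exists v' v'' : R -> R, forall phi, 0 < phi < PI ->
    is_derive (fun x => Rpower (sin x) ((1 - 2 * s) / 2) * w x) phi (v' phi) /\
    is_derive v' phi (v'' phi) /\
    v'' phi + pot_coef s * / (sin phi) ^ 2 * (Rpower (sin phi) ((1 - 2 * s) / 2) * w phi)
      - shift_coef s * (Rpower (sin phi) ((1 - 2 * s) / 2) * w phi)
    = (mu - 2 * ((1 - 2 * s) / 2) ^ 2) * (Rpower (sin phi) ((1 - 2 * s) / 2) * w phi).
Proof.
  intros Hw. set (a := (1 - 2 * s) / 2).
  set (w2 := fun x => mu * w x - 2 * a * (cos x / sin x) * w1 x).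
  exists (fun x => Rpower (sin x) a * (a * (cos x / sin x) * w x + w1 x)).
  exists (fun x => Rpower (sin x) a * (a * a * (cos x / sin x) ^ 2 * w x - a / (sin x) ^ 2 * w x
                                       + 2 * a * (cos x / sin x) * w1 x + w2 x)).
  intros phi Hphi. pose proof (sin_gt_0_in_0_PI phi Hphi) as Hs.
  destruct (Hw phi Hphi) as [H1 H2].
  destruct (is_derive_Rpower_sin_mul w w1 w2 a phi Hs H1 H2) as [D1 D2].
  split; [exact D1 | split; [exact D2|]].
  apply (eq_of_sub_eq_mul_sin2_cos2 phi _ _ (Rpower (sin phi) a * a ^ 2 * w phi / sin phi ^ 2)).
  unfold w2, pot_coef, shift_coef, a. field. lra.
Qed.

Lemma bdry_flux_eq_weighted_flux s v w x : in_0_PI x ->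
  (forall t, in_0_PI t -> w t = Rpower (sin t) ((2 * s - 1) / 2) * v t) ->
  bdry_flux s v x = weighted_flux ((1 - 2 * s) / 2) w x.
Proof.
  intros Hx Hw. unfold bdry_flux, weighted_flux.
  replace (2 * ((1 - 2 * s) / 2)) with (1 - 2 * s) by field.
  f_equal. apply Derive_ext_in_0_PI; auto. intros t Ht. symmetry. auto.
Qed.

Lemma bdry_flux_at_0_iff s v w :
  (forall t, in_0_PI t -> w t = Rpower (sin t) ((2 * s - 1) / 2) * v t) ->
  filterlim (bdry_flux s v) (at_right 0) (locally 0) <->
  vanishes_at_0 (weighted_flux ((1 - 2 * s) / 2) w).
Proof.
  intros Hw. rewrite vanishes_at_0_at_right.
  split; apply filterlim_ext_loc; apply (filter_imp in_0_PI); try apply at_right_0_in_0_PI;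
    intros x Hx; rewrite (bdry_flux_eq_weighted_flux s v w x Hx Hw); reflexivity.
Qed.

Lemma bdry_flux_at_PI_iff s v w :
  (forall t, in_0_PI t -> ex_derive w t) ->
  (forall t, in_0_PI t -> w t = Rpower (sin t) ((2 * s - 1) / 2) * v t) ->
  filterlim (bdry_flux s v) (at_left PI) (locally 0) <->
  vanishes_at_0 (weighted_flux ((1 - 2 * s) / 2) (reflect_PI w)).
Proof.
  intros Hex Hw. rewrite <- vanishes_at_0_at_left_PI. pose proof PI_gt_3.
  assert (E : forall x, 0 < x < PI ->
            weighted_flux ((1 - 2 * s) / 2) (reflect_PI w) x = - bdry_flux s v (PI - x)).
  { intros x Hx. pose proof (in_0_PI_reflect x Hx) as Hx'.
    rewrite (bdry_flux_eq_weighted_flux s v w _ Hx' Hw). unfold weighted_flux.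
    destruct (Hex _ Hx') as [l Hl].
    rewrite (is_derive_unique _ _ _ (is_derive_reflect_PI w x l Hl)), (is_derive_unique _ _ _ Hl).
    rewrite sin_PI_x. ring. }
  split; intros Hlim.
  - apply (vanishes_at_0_ext (fun x => - bdry_flux s v (PI - x)) _ PI); [lra | |].
    + intros x Hx. rewrite E; auto.
    + apply vanishes_at_0_opp, Hlim.
  - apply (vanishes_at_0_ext (fun x => - weighted_flux ((1 - 2 * s) / 2) (reflect_PI w) x) _ PI);
      [lra | |apply vanishes_at_0_opp, Hlim].
    intros x Hx. rewrite E; auto. ring.
Qed.

Lemma is_eigenvalue_level_mu_eq_0 s lam : 0 < s < 1 -> is_eigenvalue s lam ->
  exists n : nat, level_mu ((1 - 2 * s) / 2) (lam + 2 * ((1 - 2 * s) / 2) ^ 2) n = 0.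
Proof.
  intros Hs [v [[v' [v'' Hv]] [[x0 [Hx0 Hvx0]] [Fl0 FlPI]]]].
  set (w := fun x => Rpower (sin x) ((2 * s - 1) / 2) * v x).
  pose proof (geg_ode_of_eigen_ode s lam v v' v'' Hv) as Hw. fold w in Hw.
  assert (Hwv : forall t, in_0_PI t -> w t = Rpower (sin t) ((2 * s - 1) / 2) * v t) by reflexivity.
  apply (admissible_spectrum _ _ w); [lra| |].
  - apply admissible_of_flux; [lra | eexists; exact Hw | |].
    + apply (bdry_flux_at_0_iff s v w Hwv), Fl0.
    + apply (bdry_flux_at_PI_iff s v w); auto.
      intros t Ht. exact (ex_intro _ _ (proj1 (Hw t Ht))).
  - exists x0. split; auto. unfold w. pose proof (Rpower_gt_0 (sin x0) ((2 * s - 1) / 2)).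
    intros Hz. apply Rmult_integral in Hz. destruct Hz; [lra | auto].
Qed.

Lemma is_eigenvalue_gegenbauer s n : 0 < s < 1 ->
  is_eigenvalue s (- (INR n * (INR n + 2 * ((1 - 2 * s) / 2))) - 2 * ((1 - 2 * s) / 2) ^ 2).
Proof.
  intros Hs. set (a := (1 - 2 * s) / 2).
  set (w := fun x => geg_psum a n (S (S (S n))) (cos x)).
  pose proof (geg_ode_gegenbauer a n) as Hw. fold w in Hw.
  destruct (eigen_ode_of_geg_ode s _ _ _ Hw) as [v' [v'' Hv]].
  set (v := fun x => Rpower (sin x) a * w x).
  assert (Hwv : forall t, in_0_PI t -> w t = Rpower (sin t) ((2 * s - 1) / 2) * v t).
  { intros t Ht. unfold v. rewrite <- Rmult_assoc, <- Rpower_plus.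
    replace ((2 * s - 1) / 2 + a) with 0 by (unfold a; field).
    rewrite Rpower_O by (apply sin_gt_0_in_0_PI, Ht). ring. }
  destruct (gegenbauer_flux_vanishes a n ltac:(unfold a; lra)) as [F0 FPI].
  exists v. split; [|split; [|split]].
  - exists v', v''. exact Hv.
  - destruct (gegenbauer_cos_nonzero a n) as [x [Hx Hwx]]. exists x. split; auto.
    unfold v. pose proof (Rpower_gt_0 (sin x) a).
    intros Hz. apply Rmult_integral in Hz. destruct Hz; [lra | auto].
  - apply (bdry_flux_at_0_iff s v w Hwv), F0.
  - apply (bdry_flux_at_PI_iff s v w); auto.
    intros t Ht. exact (ex_intro _ _ (proj1 (Hw t Ht))).
Qed.

Theorem mainTheorem8 (s : R) (hs : 0 < s < 1) (lam : R) :
  is_eigenvalue s lam <->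
  exists k : nat, lam = - (1 - 2 * s) ^ 2 / 4 - (INR k - s + 1 / 2) ^ 2.
Proof.
  split.
  - intros Hlam. destruct (is_eigenvalue_level_mu_eq_0 s lam hs Hlam) as [k Hk].
    exists k. unfold level_mu in Hk. nra.
  - intros [k ->].
    replace (- (1 - 2 * s) ^ 2 / 4 - (INR k - s + 1 / 2) ^ 2)
      with (- (INR k * (INR k + 2 * ((1 - 2 * s) / 2))) - 2 * ((1 - 2 * s) / 2) ^ 2) by field.
    apply is_eigenvalue_gegenbauer, hs.
Qed.
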